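(* Let $(V,\nu,\tau,\tau^* )$ be a finite dimensional PN space such that $\tau^*$ is Archimedean, $\nu_p\neq\varepsilon_\infty$ for every $p\in V$, $\nu(V)\subseteq D^+$ and $\tau(D^+\times D^+)\subseteq D^+$, where the real scalar field is regarded as a PN space $(\mathbb{R},\nu',\tau',\tau'^{*})$ with $\tau'^{*}$ Archimedean, $\nu'_r\neq\varepsilon_\infty$ for all $r\in\mathbb{R}$, and $\nu'$ having the LG-property (for every $x>0$, $\lim_{r\to\infty}\nu'_r(x)=0$). Then a subset $A$ of $V$ is $D$-compact if and only if $A$ is $D$-bounded and closed (in the strong topology).
   Context: $\Delta^{+}$ is the set of functions $F:[-\infty,+\infty]\to[0,1]$ that are left-continuous on $\mathbb{R}$, nondecreasing, with $F(0)=0$ and $F(+\infty)=1$, ordered pointwise; $D^{+}=\{F\in\Delta^{+}: l^{-}F(+\infty)=1\}$, where $l^{-}f(x)=\lim_{t\to x^{-}}f(t)$. $\varepsilon_0$ is the d.f. equal to $0$ for $x\le0$ and $1$ for $x>0$; $\varepsilon_\infty$ is the d.f. equal to $0$ on all of $\mathbb{R}$. A triangle function is a map $\tau:\Delta^+\times\Delta^+\to\Delta^+$ that is associative, commutative, nondecreasing in each argument, with unit $\varepsilon_0$; it is Archimedean if its only idempotents are $\varepsilon_0$ and $\varepsilon_\infty$. A PN space is a quadruple $(V,\nu,\tau,\tau^* )$ with $V$ a real vector space, $\tau\le\tau^*$ continuous triangle functions, and $\nu:V\to\Delta^+$ such that for all $p,q\in V$: (N1) $\nu_p=\varepsilon_0$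 iff $p=\theta$; (N2) $\nu_{-p}=\nu_p$; (N3) $\nu_{p+q}\ge\tau(\nu_p,\nu_q)$; (N4) $\nu_p\le\tau^*(\nu_{\lambda p},\nu_{(1-\lambda)p})$ for all $\lambda\in[0,1]$. The strong topology is generated by $N_p(\lambda)=\{q:\nu_{p-q}(\lambda)>1-\lambda\}$, $\lambda>0$; $(p_m)$ strongly converges to $p$ if for every $\lambda>0$ eventually $p_m\in N_p(\lambda)$. For nonempty $A\subseteq V$, $R_A(x)=l^{-}\inf\{\nu_q(x):q\in A\}$ for $x\in[0,+\infty)$, $R_A(+\infty)=1$; $A$ is $D$-bounded if $R_A\in D^+$. $A$ is $D$-compact if every sequence in $A$ has a subsequence strongly converging to a vector of $A$. *)

From HB Require Import structures.
From mathcomp Require Import all_boot all_order all_algebra.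
From mathcomp Require Import all_classical all_reals all_analysis.
Set Implicit Arguments. Unset Strict Implicit. Unset Printing Implicit Defensive.
Import Order.TTheory GRing.Theory Num.Theory.
Import numFieldNormedType.Exports.
Local Open Scope classical_set_scope.
Local Open Scope ring_scope.

Section PN.
Variable R : realType.

(* A distance distribution function F : [-oo,+oo] -> [0,1] is represented by
   its restriction to the real line; the values F(-oo) = 0 and F(+oo) = 1 are
   fixed by convention and carry no information. *)

Definition in_Delta (F : R -> R) : Prop :=
  [/\ (forall x, 0 <= F x <= 1),
      (forall x y, x <= y -> F x <= F y),
      F 0 = 0 &
      (forall x, F t @[t --> x^'-] --> F x)].

Definition in_Dplus (F : R -> R) : Prop :=
  in_Delta F /\ (F x @[x --> +oo] --> (1 : R)).

Definition eps0 : R -> R := fun x => if 0 < x then 1 else 0.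
Definition epsinf : R -> R := fun _ => 0.

(** pointwise order on Delta^+ (at +oo all d.f.s equal 1) *)
Definition dfle (F G : R -> R) : Prop := forall x, F x <= G x.

(** Weak convergence of d.f.s: convergence at every continuity point of the
    limit (this is the topology of the modified Levy / Sibley metric on
    Delta^+, in which continuity of triangle functions is meant). *)
Definition wconv (Fn : nat -> R -> R) (F : R -> R) : Prop :=
  forall x, {for x, continuous F} -> Fn n x @[n --> \oo] --> F x.

Definition triangle_function (tau : (R -> R) -> (R -> R) -> (R -> R)) : Prop :=
  [/\ (forall F G, in_Delta F -> in_Delta G -> in_Delta (tau F G)),
      (forall F G H, in_Delta F -> in_Delta G -> in_Delta H ->
          tau (tau F G) H = tau F (tau G H)),
      (forall F G, in_Delta F -> in_Delta G -> tau F G = tau G F),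
      (forall F F' G, in_Delta F -> in_Delta F' -> in_Delta G ->
          dfle F F' -> dfle (tau F G) (tau F' G) /\ dfle (tau G F) (tau G F')) &
      (forall F, in_Delta F -> tau F eps0 = F)].

Definition continuous_tf (tau : (R -> R) -> (R -> R) -> (R -> R)) : Prop :=
  forall (Fn Gn : nat -> R -> R) (F G : R -> R),
    (forall n, in_Delta (Fn n)) -> (forall n, in_Delta (Gn n)) ->
    in_Delta F -> in_Delta G ->
    wconv Fn F -> wconv Gn G ->
    wconv (fun n => tau (Fn n) (Gn n)) (tau F G).

Definition archimedean_tf (tau : (R -> R) -> (R -> R) -> (R -> R)) : Prop :=
  forall F, in_Delta F -> tau F F = F -> F = eps0 \/ F = epsinf.

Definition PN_space (V : lmodType R) (nu : V -> R -> R)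
    (tau taus : (R -> R) -> (R -> R) -> (R -> R)) : Prop :=
  [/\ triangle_function tau, triangle_function taus,
      continuous_tf tau, continuous_tf taus &
      (forall F G, in_Delta F -> in_Delta G -> dfle (tau F G) (taus F G))] /\
  [/\ (forall p, in_Delta (nu p)),
      (forall p, nu p = eps0 <-> p = 0),
      (forall p, nu (- p) = nu p),
      (forall p q, dfle (tau (nu p) (nu q)) (nu (p + q))) &
      (forall p (l : R), 0 <= l <= 1 ->
          dfle (nu p) (taus (nu (l *: p)) (nu ((1 - l) *: p))))].

Definition LG_property (nu' : R -> R -> R) : Prop :=
  forall x, 0 < x -> nu' r x @[r --> +oo] --> (0 : R).

Variable V : lmodType R.
Variable nu : V -> R -> R.

Definition strong_nbhd (p : V) (l : R) : set V :=
  [set q | nu (p - q) l > 1 - l].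

Definition strong_open (U : set V) : Prop :=
  forall p, U p -> exists2 l : R, 0 < l & strong_nbhd p l `<=` U.

Definition strong_closed (A : set V) : Prop := strong_open (~` A).

Definition strong_conv (u : nat -> V) (p : V) : Prop :=
  forall l : R, 0 < l -> exists N, forall m, (N <= m)%N -> strong_nbhd p l (u m).

Definition prob_radius (A : set V) : R -> R :=
  fun x => lim ((inf [set nu q t | q in A]) @[t --> x^'-]).

Definition D_bounded (A : set V) : Prop := in_Dplus (prob_radius A).

Definition D_compact (A : set V) : Prop :=
  forall u : nat -> V, (forall n, A (u n)) ->
    exists phi : nat -> nat, {homo phi : m n / (m < n)%N} /\
      exists2 p, A p & strong_conv (u \o phi) p.

End PN.
Arguments eps0 {R}.
Arguments epsinf {R}.

From HB Require Import structures.
From mathcomp Require Import all_boot all_order all_algebra.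
From mathcomp Require Import all_classical all_reals all_analysis.
From mathcomp Require Import lra.
Import Order.TTheory GRing.Theory Num.Theory.
Import numFieldNormedType.Exports.
Set Implicit Arguments. Unset Strict Implicit. Unset Printing Implicit Defensive.
Local Open Scope classical_set_scope.
Local Open Scope ring_scope.

(* Strong convergence to theta means weak convergence of the d.f.s to eps0, so
   it is preserved by sums (continuity of tau).  For an Archimedean taus the
   taus-powers G^(m) of a d.f. with G(b) < 1 decrease to eps_inf, because their
   left-continuous limit is a taus-idempotent; with N4, nu_p <= nu_(p/m)^(m),
   this makes t_n p strongly null when t_n -> 0, and makes u_n / T_n strongly
   null when u_n ranges in a D-bounded set and T_n -> oo.  In finite dimension
   the first fact turns coordinatewise convergence into strong convergence, and
   the second bounds the coordinates of a D-bounded set (the coordinate unit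
   sphere stays away from theta), so Bolzano-Weierstrass gives D-compactness of
   closed D-bounded sets.  Conversely, a D-compact set is closed by uniqueness
   of strong limits, and D-bounded since a strong limit a of points u_n with
   nu_(u_n)(n) <= 1 - e would keep nu_a below 1 at its continuity points. *)

Section DistributionFunctions.
Variable R : realType.
Implicit Types F G : R -> R.

Lemma Delta_ge0 F x : in_Delta F -> 0 <= F x.
Proof. by case=> /(_ x) /andP[]. Qed.

Lemma Delta_le1 F x : in_Delta F -> F x <= 1.
Proof. by case=> /(_ x) /andP[]. Qed.

Lemma Delta_homo F : in_Delta F -> {homo F : x y / x <= y}.
Proof. by case. Qed.

Lemma Delta_nonpos F x : in_Delta F -> x <= 0 -> F x = 0.
Proof.
move=> hF x0; apply/eqP; rewrite eq_le Delta_ge0 // andbT.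
by case: hF => _ hmono <- _; exact: hmono.
Qed.

Lemma Delta_le_eps0 F : in_Delta F -> dfle F eps0.
Proof.
move=> hF x; rewrite /eps0; case: ltP => [_|x0]; first exact: Delta_le1.
by rewrite (Delta_nonpos hF x0).
Qed.

Lemma eps0_cont x : 0 < x -> {for x, continuous (@eps0 R)}.
Proof.
move=> x0; apply: cvg_near_cst; near=> t.
suff t0 : 0 < t by rewrite /eps0 x0 t0.
by near: t; exact: lt_nbhsr.
Unshelve. all: by end_near. Qed.

Lemma eps0_Delta : in_Delta (@eps0 R).
Proof.
split.
- by move=> x; rewrite /eps0; case: ifP; rewrite ?lexx ?ler01.
- move=> x y xy; rewrite /eps0; case: (ltP 0 x) => x0; last by case: ifP.
  by rewrite (lt_le_trans x0 xy).
- by rewrite /eps0 ltxx.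
- move=> x; rewrite /eps0; have [x0|x0] := ltP 0 x; apply: cvg_near_cst; near=> t.
  + suff -> : 0 < t by [].
    by near: t; exact: nbhs_left_gt.
  + suff -> : 0 < t = false by [].
    apply/negbTE; rewrite -leNgt.
    by apply: le_trans x0; apply/ltW; near: t; exact: nbhs_left_lt.
Unshelve. all: by end_near. Qed.

Lemma Delta_cvgy1 F : in_Delta F -> (forall e, 0 < e -> exists X, 1 - e < F X) ->
  F x @[x --> +oo] --> (1 : R).
Proof.
move=> hF F_near1; apply/cvgrPdist_le => e e0; have [X FX] := F_near1 e e0.
near=> x; have Xx : X <= x by near: x; apply: nbhs_pinfty_ge; rewrite num_real.
have Fx1 := Delta_le1 x hF; have FXx := Delta_homo hF Xx.
by rewrite ger0_norm ?subr_ge0 //; lra.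
Unshelve. all: by end_near. Qed.

Definition stepdf (b c : R) : R -> R :=
  fun x => if x <= 0 then 0 else if x <= b then c else 1.

Lemma stepdf_Delta b c : 0 <= b -> 0 <= c <= 1 -> in_Delta (stepdf b c).
Proof.
move=> b0 /andP[c0 c1]; rewrite /stepdf; split.
- by move=> x; case: ifP; [|case: ifP]; rewrite ?lexx ?ler01 ?c0 ?c1.
- move=> x y xy; have [x0|x0] := leP x 0; first by case: ifP; [|case: ifP].
  have y0 : (y <= 0) = false by apply/negbTE; rewrite -ltNge (lt_le_trans x0 xy).
  rewrite y0; have [xb|xb] := leP x b; first by case: ifP.
  by rewrite ifF //; apply/negbTE; rewrite -ltNge (lt_le_trans xb xy).
- by rewrite lexx.
- move=> x; have [x0|x0] := leP x 0.
    apply: cvg_near_cst; near=> t.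
    by rewrite ifT //; apply: le_trans x0; apply/ltW; near: t; exact: nbhs_left_lt.
  have [xb|xb] := leP x b; apply: cvg_near_cst; near=> t.
  + have t0 : (t <= 0) = false.
      by apply/negbTE; rewrite -ltNge; near: t; exact: nbhs_left_gt.
    by rewrite t0 ifT //; apply: le_trans xb; apply/ltW; near: t; exact: nbhs_left_lt.
  + have t0 : (t <= 0) = false.
      by apply/negbTE; rewrite -ltNge; near: t; exact: nbhs_left_gt.
    have tb : (t <= b) = false.
      by apply/negbTE; rewrite -ltNge; near: t; exact: nbhs_left_gt.
    by rewrite t0 tb.
Unshelve. all: by end_near. Qed.

Lemma Delta_le_stepdf F b c : in_Delta F -> F b <= c -> dfle F (stepdf b c).
Proof.
move=> hF Fb x; rewrite /stepdf; case: ifP => [x0|_]; first by rewrite Delta_nonpos.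
case: ifP => [xb|_]; last exact: Delta_le1.
exact: le_trans (Delta_homo hF xb) Fb.
Qed.

Lemma nondecreasing_cont_point F a b : {homo F : x y / x <= y} -> a < b ->
  exists x, a < x < b /\ {for x, continuous F}.
Proof.
move=> ndF ab; apply: contrapT => hn.
have sub : `]a, b[ `<=` [set x | x \in (`]a, b[) /\ discontinuity F x].
  move=> x xab; split; first by rewrite inE.
  have cl : cvg (F t @[t --> x^'-]).
    apply: nondecreasing_at_left_is_cvgr; first by apply: nearW => y s t _ _; exact: ndF.
    near=> y; exists (F x) => z [s] /=; rewrite in_itv /= => /andP[_ sx] <-.
    exact/ndF/ltW.
  have cr : cvg (F t @[t --> x^'+]).
    apply: nondecreasing_at_right_is_cvgr; first by apply: nearW => y s t _ _; exact: ndF.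
    near=> y; exists (F x) => z [s] /=; rewrite in_itv /= => /andP[xs _] <-.
    exact/ndF/ltW.
  split => //; apply/negP => /eqP heq; apply: hn; exists x; split.
    by move: xab; rewrite /= in_itv.
  have left_le : lim (F t @[t --> x^'-]) <= F x.
    apply: limr_le => //; near=> t; apply/ndF/ltW; near: t; exact: nbhs_left_lt.
  have right_ge : F x <= lim (F t @[t --> x^'+]).
    apply: limr_ge => //; near=> t; apply/ndF/ltW; near: t; exact: nbhs_right_gt.
  have left_eq : lim (F t @[t --> x^'-]) = F x.
    by apply/eqP; rewrite eq_le left_le heq right_ge.
  apply/left_right_continuousP; split; first by rewrite -[X in _ --> X]left_eq.
  by rewrite -[X in _ --> X]left_eq heq.
have := countable_lebesgue_measure0 (sub_countable (subset_card_le sub)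
  (discontinuity_countable (fun s t _ _ => ndF s t))).
rewrite lebesgue_measure_itv /= lte_fin ab => /eqP.
by rewrite -EFinD eqe subr_eq0 => /eqP ba; move: ab; rewrite ba ltxx.
Unshelve. all: by end_near. Qed.

End DistributionFunctions.

Section LeftRegularization.
Variable R : realType.
Variable I : R -> R.
Hypothesis I_homo : {homo I : x y / x <= y}.
Hypothesis I_bound : forall t, 0 <= I t <= 1.

Definition lsup x := sup [set I t | t in `]-oo, x[].

Let lsup_has_sup x : has_sup [set I t | t in `]-oo, x[].
Proof.
split; first by exists (I (x - 1)), (x - 1) => //=; rewrite in_itv /= gtrBl.
by exists 1 => _ [t _ <-]; case/andP: (I_bound t).
Qed.

Lemma lsup_ge z x : z < x -> I z <= lsup x.
Proof. by move=> zx; apply: sup_upper_bound => //; exists z => //=; rewrite in_itv. Qed.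

Let lsup_adherent x e : 0 < e -> exists2 z, z < x & lsup x - e < I z.
Proof.
move=> e0; have [w [z] /=] := sup_adherent e0 (lsup_has_sup x).
by rewrite in_itv /= => zx <-; exists z.
Qed.

Lemma lsup_le x c : (forall z, z < x -> I z <= c) -> lsup x <= c.
Proof.
move=> h; apply: ge_sup; first by case: (lsup_has_sup x).
by move=> w [z] /=; rewrite in_itv /= => /h Iz <-.
Qed.

Lemma lsup_le_self x : lsup x <= I x.
Proof. by apply: lsup_le => z /ltW; exact: I_homo. Qed.

Lemma lsup_homo : {homo lsup : x y / x <= y}.
Proof. by move=> x y xy; apply: lsup_le => z zx; apply: lsup_ge; exact: lt_le_trans xy. Qed.

Lemma cvg_lsup x : I t @[t --> x^'-] --> lsup x.
Proof.
apply/cvgrPdist_le => e e0; have [z zx hz] := lsup_adherent x e0; near=> t.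
have zt : z < t by near: t; exact: nbhs_left_gt.
have tx : t < x by near: t; exact: nbhs_left_lt.
have Izt := I_homo (ltW zt); have Itx := lsup_ge tx.
by rewrite ger0_norm ?subr_ge0 //; lra.
Unshelve. all: by end_near. Qed.

Lemma lsup_Delta : (forall t, t <= 0 -> I t = 0) -> in_Delta lsup.
Proof.
move=> I_nonpos; split.
- move=> x; have x1 : x - 1 < x by rewrite gtrBl.
  apply/andP; split; first by apply: le_trans (lsup_ge x1); case/andP: (I_bound (x - 1)).
  by apply: le_trans (lsup_le_self x) _; case/andP: (I_bound x).
- exact: lsup_homo.
- apply/eqP; rewrite eq_le; apply/andP; split.
    by apply: lsup_le => z /ltW z0; rewrite I_nonpos.
  by apply: le_trans (lsup_ge (ltrN10 R)); rewrite I_nonpos ?lerN10.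
- move=> x; apply/cvgrPdist_le => e e0; have [z zx hz] := lsup_adherent x e0.
  near=> t.
  have zt : z < t by near: t; exact: nbhs_left_gt.
  have tx : t < x by near: t; exact: nbhs_left_lt.
  have lzt := lsup_ge zt; have ltx := lsup_homo (ltW tx).
  by rewrite ger0_norm ?subr_ge0 //; lra.
Unshelve. all: by end_near. Qed.

Lemma lsup_cont_eq x : {for x, continuous lsup} -> I x = lsup x.
Proof.
move=> cx; apply/eqP; rewrite eq_le lsup_le_self andbT.
have [_ /= lsup_right] := (left_right_continuousP lsup x).2 cx.
apply: (ler_cvg_to (cvg_cst (I x)) lsup_right).
by near=> t; apply: lsup_ge; near: t; exact: nbhs_right_gt.
Unshelve. all: by end_near. Qed.

Lemma lsup_eq_Delta K : in_Delta K ->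
  (forall x, {for x, continuous K} -> I x = K x) -> lsup = K.
Proof.
move=> KD IK; apply/funext => x; apply/eqP; rewrite eq_le; apply/andP; split.
  apply: lsup_le => z zx.
  have [w [/andP[zw wx] cw]] := nondecreasing_cont_point (Delta_homo KD) zx.
  by rewrite (le_trans (I_homo (ltW zw))) // IK // (Delta_homo KD (ltW wx)).
have [_ _ _ /(_ x) K_left] := KD.
apply: (ler_cvg_to K_left (cvg_cst (lsup x))); near=> t.
have tx : t < x by near: t; exact: nbhs_left_lt.
have [w [/andP[tw wx] cw]] := nondecreasing_cont_point (Delta_homo KD) tx.
by rewrite (le_trans (Delta_homo KD (ltW tw))) // -IK // lsup_ge.
Unshelve. all: by end_near. Qed.

End LeftRegularization.

Section TriangleFunction.
Variable R : realType.
Implicit Types F G H : R -> R.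
Variable tau : (R -> R) -> (R -> R) -> (R -> R).
Hypothesis tf : triangle_function tau.

Lemma tf_Delta F G : in_Delta F -> in_Delta G -> in_Delta (tau F G).
Proof. by case: tf => h *; exact: h. Qed.

Lemma tf_unitr F : in_Delta F -> tau F eps0 = F.
Proof. by case: tf => _ _ _ _; apply. Qed.

Lemma tf_unitl F : in_Delta F -> tau eps0 F = F.
Proof.
move=> hF; case: tf => _ _ hC _ _.
by rewrite hC ?tf_unitr //; exact: eps0_Delta.
Qed.

Lemma tf_assoc F G H : in_Delta F -> in_Delta G -> in_Delta H ->
  tau (tau F G) H = tau F (tau G H).
Proof. by case: tf => _ h _ _ _; exact: h. Qed.

Lemma tf_le F F' G G' : in_Delta F -> in_Delta F' -> in_Delta G -> in_Delta G' ->
  dfle F F' -> dfle G G' -> dfle (tau F G) (tau F' G').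
Proof.
move=> hF hF' hG hG' FF' GG' x; case: tf => _ _ _ hmono _.
apply: (le_trans (proj1 (hmono _ _ _ hF hF' hG FF') x)).
exact: (proj2 (hmono _ _ _ hG hG' hF' GG') x).
Qed.

Lemma tf_lel F G : in_Delta F -> in_Delta G -> dfle (tau F G) G.
Proof.
move=> hF hG x.
have := tf_le hF (@eps0_Delta R) hG hG (Delta_le_eps0 hF) (fun=> lexx _) x.
by rewrite tf_unitl.
Qed.

Lemma tf_ler F G : in_Delta F -> in_Delta G -> dfle (tau F G) F.
Proof.
move=> hF hG x.
have := tf_le hF hF hG (@eps0_Delta R) (fun=> lexx _) (Delta_le_eps0 hG) x.
by rewrite tf_unitr.
Qed.

Fixpoint tf_pow G (m : nat) : R -> R :=
  if m is m'.+1 then tau G (tf_pow G m') else eps0.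

Lemma tf_pow_Delta G m : in_Delta G -> in_Delta (tf_pow G m).
Proof. by move=> hG; elim: m => [|m ih] /=; [exact: eps0_Delta | exact: tf_Delta]. Qed.

Lemma tf_pow1 G : in_Delta G -> tf_pow G 1 = G.
Proof. exact: tf_unitr. Qed.

Lemma tf_powD G a b : in_Delta G -> tf_pow G (a + b) = tau (tf_pow G a) (tf_pow G b).
Proof.
move=> hG; elim: a => [|a ih]; first by rewrite add0n tf_unitl //; exact: tf_pow_Delta.
by rewrite addSn /= ih tf_assoc //; exact: tf_pow_Delta.
Qed.

Lemma tf_pow_nonincr G m n : in_Delta G -> (m <= n)%N -> dfle (tf_pow G n) (tf_pow G m).
Proof.
move=> hG /subnK <-; elim: (n - m)%N => [|k ih] x //=.
exact: le_trans (tf_lel hG (tf_pow_Delta _ hG) x) (ih x).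
Qed.

Lemma tf_pow_le F G m : in_Delta F -> in_Delta G -> dfle F G ->
  dfle (tf_pow F m) (tf_pow G m).
Proof.
move=> hF hG FG; elim: m => [|m ih] //=.
by apply: tf_le => //; exact: tf_pow_Delta.
Qed.

End TriangleFunction.

Section ArchimedeanDecay.
Variable R : realType.
Variable tau : (R -> R) -> (R -> R) -> (R -> R).
Hypotheses (tf : triangle_function tau) (ct : continuous_tf tau).
Hypothesis ar : archimedean_tf tau.
Variable G : R -> R.
Hypothesis hG : in_Delta G.

Let H := tf_pow tau G.
Let HD m : in_Delta (H m). Proof. exact: tf_pow_Delta. Qed.

Let P z := inf (range (H^~ z)).

Let P_cvg z : H m z @[m --> \oo] --> P z.
Proof.
apply: nonincreasing_cvgn; first by move=> m n mn; exact: tf_pow_nonincr.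
by exists 0 => _ [m _ <-]; exact: Delta_ge0.
Qed.

Let P_le z m : P z <= H m z.
Proof. by apply: ge_inf; [exists 0 => _ [k _ <-]; exact: Delta_ge0 | exists m]. Qed.

Let P_ge0 z : 0 <= P z.
Proof.
by apply: lb_le_inf; [exists (H 0%N z), 0%N | move=> _ [m _ <-]; exact: Delta_ge0].
Qed.

Let P_bound z : 0 <= P z <= 1.
Proof. by rewrite P_ge0 (le_trans (P_le z 0)) //; exact: Delta_le1. Qed.

Let P_homo : {homo P : x y / x <= y}.
Proof.
move=> x y xy; apply: lb_le_inf; first by exists (H 0%N y), 0%N.
by move=> _ [m _ <-]; exact: le_trans (P_le x m) (Delta_homo (HD m) xy).
Qed.

Let P_nonpos z : z <= 0 -> P z = 0.
Proof.
move=> z0; apply/eqP; rewrite eq_le P_ge0 andbT.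
by apply: le_trans (P_le z 0) _; rewrite (Delta_nonpos (HD 0) z0).
Qed.

Let L := lsup P.
Let L_Delta : in_Delta L. Proof. exact: lsup_Delta. Qed.

(* H_m tends weakly to L, hence H_(2m) = tau H_m H_m tends weakly to tau L L;
   both L and tau L L are then left-continuous regularizations of P. *)
Let L_idem : tau L L = L.
Proof.
have wH : wconv H L by move=> x cx; rewrite /L -lsup_cont_eq.
have KD : in_Delta (tau L L) by exact: tf_Delta.
have wK : wconv (fun m => H (m + m)%N) (tau L L).
  move=> x cx; suff -> : (fun m => H (m + m)%N x) = (fun m => tau (H m) (H m) x).
    exact: (ct HD HD L_Delta L_Delta wH wH cx).
  by apply/funext => m; rewrite /H tf_powD.
apply/esym/lsup_eq_Delta => // x cx; apply/eqP; rewrite eq_le; apply/andP; split.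
  by apply: (ler_cvg_to (cvg_cst _) (wK x cx)); apply: nearW => m; exact: P_le.
apply: (ler_cvg_to (wK x cx) (@P_cvg x)); apply: nearW => m.
by apply: tf_pow_nonincr; rewrite ?leq_addr.
Qed.

Lemma tf_pow_cvg0 b : 0 < b -> G b < 1 -> forall y, tf_pow tau G m y @[m --> \oo] --> 0.
Proof.
move=> b0 Gb y; have [L0|Linf] := ar L_Delta L_idem.
  have : L b <= G b.
    by rewrite -(tf_pow1 tf hG); exact: le_trans (lsup_le_self P_homo P_bound b) (P_le b 1).
  by rewrite L0 /eps0 b0; lra.
suff <- : P y = 0 by exact: P_cvg.
apply/eqP; rewrite eq_le P_ge0 andbT.
have y1 : y < y + 1 by rewrite ltrDl.
by have := lsup_ge P_bound y1; rewrite -/L Linf.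
Qed.

End ArchimedeanDecay.

Lemma tf_pow_lt_unif (R : realType) (tau : (R -> R) -> (R -> R) -> (R -> R)) b c y e :
  triangle_function tau -> continuous_tf tau -> archimedean_tf tau ->
  0 < b -> 0 <= c < 1 -> 0 < e ->
  exists m, forall F, in_Delta F -> F b <= c -> tf_pow tau F m y < e.
Proof.
move=> tf ct ar b0 /andP[c0 c1] e0.
have GD : in_Delta (stepdf b c) by apply: stepdf_Delta; [exact: ltW | rewrite c0 ltW].
have Gb : stepdf b c b < 1 by rewrite /stepdf lexx leNgt b0.
have [m hm] := filter_ex (cvgr_lt _ (tf_pow_cvg0 tf ct ar GD b0 Gb y) _ e0).
exists m => F FD Fb; apply: le_lt_trans hm.
exact: tf_pow_le (Delta_le_stepdf FD Fb) y.
Qed.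

Section PNSpace.
Variables (R : realType) (V : lmodType R) (nu : V -> R -> R).
Variables tau taus : (R -> R) -> (R -> R) -> (R -> R).
Hypothesis PN : PN_space nu tau taus.

Lemma PN_tf_tau : triangle_function tau. Proof. by case: PN => -[]. Qed.
Lemma PN_tf_taus : triangle_function taus. Proof. by case: PN => -[]. Qed.
Lemma PN_ct_tau : continuous_tf tau. Proof. by case: PN => -[]. Qed.
Lemma PN_ct_taus : continuous_tf taus. Proof. by case: PN => -[]. Qed.

Lemma nu_Delta p : in_Delta (nu p). Proof. by case: PN => _ []. Qed.
Lemma nu_eq_eps0 p : nu p = eps0 <-> p = 0. Proof. by case: PN => _ []. Qed.
Lemma nu0 : nu 0 = eps0. Proof. exact/nu_eq_eps0. Qed.
Lemma nuN p : nu (- p) = nu p. Proof. by case: PN => _ []. Qed.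

Lemma nu_tauD p q : dfle (tau (nu p) (nu q)) (nu (p + q)).
Proof. by case: PN => _ []. Qed.

Lemma nu_taus_split p l : 0 <= l <= 1 ->
  dfle (nu p) (taus (nu (l *: p)) (nu ((1 - l) *: p))).
Proof. by case: PN => _ [] _ _ _ _; apply. Qed.

Lemma nu_le_scale p s : 0 <= s <= 1 -> dfle (nu p) (nu (s *: p)).
Proof.
move=> s01 x; apply: le_trans (nu_taus_split p s01 x) _.
exact: (tf_ler PN_tf_taus (nu_Delta _) (nu_Delta _)).
Qed.

Lemma nu_natmul_le q m : dfle (nu (m%:R *: q)) (tf_pow taus (nu q) m).
Proof.
elim: m => [|m ih]; first by rewrite scale0r nu0.
have m1 : (m.+1%:R : R) != 0 by rewrite pnatr_eq0.
have l01 : 0 <= (m.+1%:R : R)^-1 <= 1 by rewrite invr_ge0 ler0n invf_le1 ?ltr0n ?ler1n.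
move=> x; apply: le_trans (nu_taus_split _ l01 x) _.
rewrite scalerA mulVf // scale1r scalerA mulrBl mul1r mulVf // -natr1 addrK.
have h := tf_le PN_tf_taus (nu_Delta q) (nu_Delta q) (nu_Delta (m%:R *: q))
  (tf_pow_Delta PN_tf_taus m (nu_Delta q)) (fun=> lexx _) ih.
exact: h x.
Qed.

Lemma nu_le_tf_pow p t m : 0 < t -> m%:R * t <= 1 ->
  dfle (nu p) (tf_pow taus (nu (t *: p)) m).
Proof.
move=> t0 mt x; have mt01 : 0 <= m%:R * t <= 1 by rewrite mt mulr_ge0 // ltW.
by apply: le_trans (nu_le_scale p mt01 x) _; rewrite -scalerA; exact: nu_natmul_le.
Qed.

Definition null_seq (f : nat -> V) := forall x d : R, 0 < x -> 0 < d ->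
  exists N, forall n, (N <= n)%N -> 1 - d < nu (f n) x.

Lemma null_seq_wconv f : null_seq f -> wconv (fun n => nu (f n)) eps0.
Proof.
move=> hf x _; have [x0|x0] := ltP 0 x; last first.
  apply: cvg_near_cst; apply: nearW => n.
  by rewrite /eps0 ltNge x0 /= (Delta_nonpos (nu_Delta _) x0).
apply/cvgrPdist_le => e e0; have [N hN] := hf x e x0 e0.
near=> n; have fn1 := Delta_le1 x (nu_Delta (f n)).
have /hN : (N <= n)%N by near: n; exact: nbhs_infty_ge.
by rewrite /eps0 x0 ger0_norm ?subr_ge0 //; lra.
Unshelve. all: by end_near. Qed.

Lemma null_seq_wconv_le f G : (forall n, dfle (G n) (nu (f n))) ->
  wconv G eps0 -> null_seq f.
Proof.
move=> Gf hG x d x0 d0.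
have := hG x (eps0_cont x0); rewrite /eps0 x0.
move=> /cvgrPdist_lt /(_ d d0) [N _ hN]; exists N => n /hN /=.
by have := Gf n x; have := ler_norm (1 - G n x); lra.
Qed.

Lemma null_seq_eq f g : f =1 g -> null_seq f -> null_seq g.
Proof.
by move=> fg hf x d x0 d0; have [N hN] := hf x d x0 d0; exists N => n; rewrite -fg; exact: hN.
Qed.

Lemma null_seq0 : null_seq (fun _ => 0).
Proof. by move=> x d x0 d0; exists 0%N => n _; rewrite nu0 /eps0 x0; lra. Qed.

Lemma null_seqN f : null_seq f -> null_seq (fun n => - f n).
Proof.
by move=> hf x d x0 d0; have [N hN] := hf x d x0 d0; exists N => n; rewrite nuN; exact: hN.
Qed.

Lemma null_seqD f g : null_seq f -> null_seq g -> null_seq (fun n => f n + g n).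
Proof.
move=> hf hg; apply: (null_seq_wconv_le (G := fun n => tau (nu (f n)) (nu (g n)))).
  by move=> n; exact: nu_tauD.
have := PN_ct_tau (fun n => nu_Delta (f n)) (fun n => nu_Delta (g n)) (@eps0_Delta R)
  (@eps0_Delta R) (null_seq_wconv hf) (null_seq_wconv hg).
by rewrite tf_unitl //; [exact: PN_tf_tau | exact: eps0_Delta].
Qed.

Lemma null_seq_sum (I : Type) (s : seq I) (f : I -> nat -> V) :
  (forall i, null_seq (f i)) -> null_seq (fun n => \sum_(i <- s) f i n).
Proof.
move=> hf; elim: s => [|i s ih].
  by apply: null_seq_eq null_seq0 => n; rewrite big_nil.
by apply: null_seq_eq (null_seqD (hf i) ih) => n; rewrite big_cons.
Qed.

Lemma null_seq_cst q : null_seq (fun _ => q) -> q = 0.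
Proof.
move=> hq; apply/nu_eq_eps0/funext => x; rewrite /eps0.
have [x0|x0] := ltP 0 x; last exact: Delta_nonpos (nu_Delta q) x0.
apply/eqP; rewrite eq_le (Delta_le1 _ (nu_Delta q)) /= leNgt; apply/negP => qx.
have d0 : 0 < 1 - nu q x by rewrite subr_gt0.
have [N hN] := hq x _ x0 d0.
by have := hN N (leqnn N); lra.
Qed.

Lemma null_seq_subseq f (phi : nat -> nat) : {homo phi : m n / (m < n)%N} ->
  null_seq f -> null_seq (f \o phi).
Proof.
move=> phi_incr hf x d x0 d0; have [N hN] := hf x d x0 d0; exists N => n Nn.
exact/hN/(leq_trans Nn)/unstable.mono_leq_infl/leq_mono.
Qed.

Lemma strong_convE u p : strong_conv nu u p <-> null_seq (fun n => p - u n).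
Proof.
split=> [hs x d x0 d0 | hc l l0]; last by have [N hN] := hc l l l0 l0; exists N.
have m0 : 0 < Num.min x d by rewrite lt_min x0 d0.
have [N hN] := hs _ m0; exists N => n /hN.
rewrite /strong_nbhd /= => near_p.
have mx : Num.min x d <= x by rewrite ge_min lexx.
have md : Num.min x d <= d by rewrite ge_min lexx orbT.
by have := Delta_homo (nu_Delta (p - u n)) mx; lra.
Qed.

Lemma strong_conv_unique u p q : strong_conv nu u p -> strong_conv nu u q -> p = q.
Proof.
move=> /strong_convE hp /strong_convE hq; apply/eqP; rewrite -subr_eq0; apply/eqP.
apply: null_seq_cst; apply: null_seq_eq (null_seqD hp (null_seqN hq)) => n.
by rewrite opprB addrA subrK.
Qed.

(* N3 for (u n - a) + a gives tau (nu (u n - a)) (nu a) <= nu (u n), and the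
   left side tends to tau eps0 (nu a) = nu a at continuity points of nu a. *)
Lemma strong_conv_nu_ge u a z e : strong_conv nu u a -> {for z, continuous (nu a)} ->
  0 < e -> exists N, forall n, (N <= n)%N -> nu a z - e < nu (u n) z.
Proof.
move=> /strong_convE /null_seqN hu cz e0.
have hu' : null_seq (fun n => u n - a) by apply: null_seq_eq hu => n; rewrite opprB.
have cst : wconv (fun=> nu a) (nu a) by move=> x _; exact: cvg_cst.
have w := PN_ct_tau (fun n => nu_Delta _) (fun=> nu_Delta a) (@eps0_Delta R) (nu_Delta a)
  (null_seq_wconv hu') cst.
rewrite (tf_unitl PN_tf_tau (nu_Delta a)) in w.
have /cvgrPdist_lt /(_ e e0) [N _ hN] := w _ cz; exists N => n /hN /=.
have := nu_tauD (u n - a) a z; rewrite subrK.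
by have := ler_norm (nu a z - tau (nu (u n - a)) (nu a) z); lra.
Qed.

Hypothesis archS : archimedean_tf taus.

Lemma nu_scale_near1 p x d : nu p <> epsinf -> 0 < x -> 0 < d -> d <= 1 ->
  exists2 eta : R, 0 < eta & forall s, 0 < s < eta -> 1 - d < nu (s *: p) x.
Proof.
move=> np x0 d0 d1.
have [y py] : exists y, 0 < nu p y.
  apply: contrapT => hn; apply: np; apply/funext => y; apply/eqP.
  rewrite /epsinf eq_le (Delta_ge0 _ (nu_Delta p)) andbT leNgt; apply/negP => h.
  by apply: hn; exists y.
have c01 : 0 <= 1 - d < 1 by apply/andP; split; lra.
have [m hm] := tf_pow_lt_unif y PN_tf_taus PN_ct_taus archS x0 c01 py.
exists (m.+1%:R)^-1; first by rewrite invr_gt0 ltr0n.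
move=> s /andP[s0 sm]; rewrite ltNge; apply/negP => small.
have ms : m%:R * s <= 1.
  have : m.+1%:R * s < m.+1%:R * (m.+1%:R)^-1 by rewrite ltr_pM2l ?ltr0n.
  rewrite mulfV ?pnatr_eq0 // => /ltW; apply: le_trans.
  by rewrite ler_pM2r // ler_nat.
by have := nu_le_tf_pow p s0 ms y; have := hm _ (nu_Delta _) small; lra.
Qed.

Lemma null_seq_scale p (t : nat -> R) : nu p <> epsinf -> t n @[n --> \oo] --> 0 ->
  null_seq (fun n => t n *: p).
Proof.
move=> np ht x d x0 d0; have [d1|d1] := leP d 1; last first.
  by exists 0%N => n _; have := Delta_ge0 x (nu_Delta (t n *: p)); lra.
have [eta eta0 heta] := nu_scale_near1 np x0 d0 d1.
have [N _ hN] := (cvgrPdist_lt _ _).1 ht eta eta0.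
exists N => n /hN; rewrite /= sub0r normrN => tn_eta.
have [tn0|tn0|->] := ltgtP (t n) 0; last by rewrite scale0r nu0 /eps0 x0; lra.
- by rewrite -nuN -scaleNr heta // oppr_gt0 tn0 -(ltr0_norm tn0).
- by rewrite heta // tn0 -(gtr0_norm tn0).
Qed.

End PNSpace.

Section ProbabilisticRadius.
Variables (R : realType) (V : lmodType R) (nu : V -> R -> R).
Variables tau taus : (R -> R) -> (R -> R) -> (R -> R).
Hypothesis PN : PN_space nu tau taus.
Variable A : set V.
Hypothesis A0 : A !=set0.

Definition inf_nu t := inf [set nu q t | q in A].

Lemma inf_nu_has_inf t : has_inf [set nu q t | q in A].
Proof.
split; first by case: A0 => q Aq; exists (nu q t), q.
by exists 0 => _ [q _ <-]; exact: Delta_ge0 (nu_Delta PN q).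
Qed.

Lemma inf_nu_le q t : A q -> inf_nu t <= nu q t.
Proof. by move=> Aq; apply: (ge_inf (inf_nu_has_inf t).2); exists q. Qed.

Lemma inf_nu_bound t : 0 <= inf_nu t <= 1.
Proof.
case: A0 => q Aq; apply/andP; split.
  by apply: lb_le_inf (inf_nu_has_inf t).1 _ => _ [p _ <-]; exact: Delta_ge0 (nu_Delta PN p).
exact: le_trans (inf_nu_le t Aq) (Delta_le1 t (nu_Delta PN q)).
Qed.

Lemma inf_nu_homo : {homo inf_nu : s t / s <= t}.
Proof.
move=> s t st; apply: lb_le_inf (inf_nu_has_inf t).1 _ => _ [q Aq <-].
exact: le_trans (inf_nu_le s Aq) (Delta_homo (nu_Delta PN q) st).
Qed.

Lemma prob_radiusE : prob_radius nu A = lsup inf_nu.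
Proof.
apply/funext => x; apply: cvg_lim; first exact: Rhausdorff.
exact: cvg_lsup inf_nu_homo inf_nu_bound x.
Qed.

Lemma prob_radius_Delta : in_Delta (prob_radius nu A).
Proof.
rewrite prob_radiusE; apply: lsup_Delta inf_nu_homo inf_nu_bound _ => t t0.
apply/eqP; rewrite eq_le (andP (inf_nu_bound t)).1 andbT; case: A0 => q Aq.
by rewrite -(Delta_nonpos (nu_Delta PN q) t0); exact: inf_nu_le.
Qed.

Lemma prob_radius_le q x : A q -> prob_radius nu A x <= nu q x.
Proof.
move=> Aq; rewrite prob_radiusE; apply: (lsup_le inf_nu_bound) => t tx.
exact: le_trans (inf_nu_le t Aq) (Delta_homo (nu_Delta PN q) (ltW tx)).
Qed.

Lemma inf_nu_le_prob_radius t x : t < x -> inf_nu t <= prob_radius nu A x.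
Proof. by move=> tx; rewrite prob_radiusE; exact: (lsup_ge inf_nu_bound tx). Qed.

Lemma prob_radius_lt_witness t c : prob_radius nu A (t + 1) < c ->
  exists q, A q /\ nu q t < c.
Proof.
move=> RAc; have t1 : t < t + 1 by rewrite ltrDl.
have ct : 0 < c - inf_nu t by rewrite subr_gt0 (le_lt_trans (inf_nu_le_prob_radius t1)).
have [_ [q Aq <-]] := inf_adherent ct (inf_nu_has_inf t).
by rewrite addrC subrK; exists q.
Qed.

End ProbabilisticRadius.

Section CompactForward.
Variables (R : realType) (V : lmodType R) (nu : V -> R -> R).
Variables tau taus : (R -> R) -> (R -> R) -> (R -> R).
Hypothesis PN : PN_space nu tau taus.
Variable A : set V.

Lemma D_compact_closed : D_compact nu A -> strong_closed nu A.
Proof.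
move=> hc p Ap; apply: contrapT => p_adh.
have [u hu] : {u : nat -> V & forall n, A (u n) /\ strong_nbhd nu p n.+1%:R^-1 (u n)}.
  apply: (choice (P := fun n q => A q /\ strong_nbhd nu p n.+1%:R^-1 q)) => n.
  apply: contrapT => hn; apply: p_adh; exists n.+1%:R^-1; first by rewrite invr_gt0.
  by move=> q pq Aq; apply: hn; exists q.
have [phi [phi_incr [a Aa ua]]] := hc u (fun n => (hu n).1).
suff up : strong_conv nu (u \o phi) p by apply: Ap; rewrite (strong_conv_unique PN up ua).
move=> l l0; exists (Num.truncn l^-1) => n Nn.
have kl : (phi n).+1%:R^-1 <= l.
  rewrite -[l]invrK lef_pV2 ?posrE ?ltr0n ?invr_gt0 //.
  apply/ltW/(lt_le_trans (truncnS_gt _)); rewrite ler_nat ltnS.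
  exact: leq_trans Nn (unstable.mono_leq_infl (leq_mono phi_incr) n).
have near_p := (hu (phi n)).2; rewrite /strong_nbhd /= in near_p *.
apply: le_lt_trans (lt_le_trans near_p (Delta_homo (nu_Delta PN _) kl)).
by rewrite lerD2l lerN2.
Qed.

Hypothesis nu_Dplus : forall p, in_Dplus (nu p).
Hypothesis A0 : A !=set0.

Lemma D_compact_bounded : D_compact nu A -> D_bounded nu A.
Proof.
move=> hc; have RA_Delta := prob_radius_Delta PN A0.
split => //; apply: Delta_cvgy1 => // e e0; apply: contrapT => RA_small.
have [u hu] : {u : nat -> V & forall n, A (u n) /\ nu (u n) n%:R < 1 - e / 2}.
  apply: (choice (P := fun n q => A q /\ nu q n%:R < 1 - e / 2)) => n.
  apply: (prob_radius_lt_witness PN A0); rewrite ltNge; apply/negP => RA_n.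
  by apply: RA_small; exists (n%:R + 1); lra.
have [phi [phi_incr [a Aa ua]]] := hc u (fun n => (hu n).1).
have e4 : 0 < e / 4 by rewrite divr_gt0.
have [y ay] : exists y, 1 - e / 4 < nu a y.
  have [_ nu_a1] := nu_Dplus a.
  by apply: filter_ex (cvgr_gt _ nu_a1 _ _); rewrite gtrBl.
have y1 : y < y + 1 by rewrite ltrDl.
have [z [/andP[yz _] cz]] := nondecreasing_cont_point (Delta_homo (nu_Delta PN a)) y1.
have [N hN] := strong_conv_nu_ge PN ua cz e4.
pose n := maxn N (Num.truncn z).+1.
have near_a := hN n (leq_maxl _ _); rewrite /= in near_a.
have z_phi : nu (u (phi n)) z <= nu (u (phi n)) (phi n)%:R.
  apply/(Delta_homo (nu_Delta PN _))/ltW/(lt_le_trans (truncnS_gt z)); rewrite ler_nat.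
  exact: leq_trans (leq_maxr _ _) (unstable.mono_leq_infl (leq_mono phi_incr) n).
have small := (hu (phi n)).2.
have := Delta_homo (nu_Delta PN a) (ltW yz).
lra.
Qed.

End CompactForward.

Lemma increasing_seq_homo (f : nat -> nat) : increasing_seq f -> {homo f : m n / (m < n)%N}.
Proof. by move=> f_mono m n; rewrite !ltnNge -[(f n <= f m)%N]/(f n <= f m)%O f_mono. Qed.

Lemma cvg_homo_subseq (T : topologicalType) (u : nat -> T) (l : T) (phi : nat -> nat) :
  {homo phi : m n / (m < n)%N} -> u n @[n --> \oo] --> l -> (u \o phi) n @[n --> \oo] --> l.
Proof.
move=> phi_incr; apply: cvg_comp => P [N _ hN]; exists N => // n /= Nn.
exact/hN/(leq_trans Nn)/unstable.mono_leq_infl/leq_mono.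
Qed.

Lemma bolzano_weierstrass_fin (R : realType) k (d : nat -> 'I_k -> R) (B : R) :
  (forall n i, `|d n i| <= B) ->
  exists phi : nat -> nat, {homo phi : m n / (m < n)%N} /\
    forall i, cvgn (fun n => d (phi n) i).
Proof.
move=> dB.
suff /(_ k (leqnn k)) [phi [phi_incr cvg_lt]] : forall j, (j <= k)%N ->
    exists phi : nat -> nat, {homo phi : m n / (m < n)%N} /\
      forall i : 'I_k, (i < j)%N -> cvgn (fun n => d (phi n) i).
  by exists phi; split => // i; exact: cvg_lt.
elim=> [|j ih] jk; first by exists id; split => // i; rewrite ltn0.
have [phi [phi_incr cvg_lt]] := ih (ltnW jk).
pose j' : 'I_k := Ordinal jk.
have bd : bounded_fun (fun n => d (phi n) j').
  rewrite /bounded_near; near=> M => n _ /=; apply: le_trans (dB _ _) _.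
  by near: M; apply: nbhs_pinfty_ge; rewrite num_real.
have [psi /increasing_seq_homo psi_incr cvg_j] := bolzano_weierstrass bd.
exists (phi \o psi); split => [m n mn|i]; first exact/phi_incr/psi_incr.
rewrite ltnS leq_eqVlt => /orP[/eqP ij|/cvg_lt/cvg_ex[l cvg_i]].
  by have -> : i = j' by apply: val_inj.
by apply/cvg_ex; exists l; exact: (cvg_homo_subseq psi_incr cvg_i).
Unshelve. all: by end_near. Qed.

Section DBoundedScaling.
Variables (R : realType) (V : lmodType R) (nu : V -> R -> R).
Variables tau taus : (R -> R) -> (R -> R) -> (R -> R).
Hypothesis PN : PN_space nu tau taus.
Hypothesis archS : archimedean_tf taus.
Variable A : set V.
Hypothesis A0 : A !=set0.

Lemma D_bounded_null_scale (u : nat -> V) (T : nat -> R) : D_bounded nu A ->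
  (forall n, A (u n)) -> (forall n, n.+1%:R <= T n) ->
  null_seq nu (fun n => (T n)^-1 *: u n).
Proof.
move=> [_ RA1] uA T_ge x d x0 d0; have [d1|d1] := leP d 1; last first.
  by exists 0%N => n _; have := Delta_ge0 x (nu_Delta PN ((T n)^-1 *: u n)); lra.
have [y RAy] := filter_ex (cvgr_gt _ RA1 _ ltr01).
have c01 : 0 <= 1 - d < 1 by apply/andP; split; lra.
have [m hm] := tf_pow_lt_unif y (PN_tf_taus PN) (PN_ct_taus PN) archS x0 c01 RAy.
exists m => n mn; rewrite ltNge; apply/negP => small.
have T0 : 0 < T n by apply: lt_le_trans (T_ge n); rewrite ltr0n.
have Tinv0 : 0 < (T n)^-1 by rewrite invr_gt0.
have mT : m%:R * (T n)^-1 <= 1.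
  rewrite -[_ * _^-1]/(_ / _) ler_pdivrMr // mul1r; apply: le_trans (T_ge n).
  by rewrite ler_nat (leq_trans mn).
have := nu_le_tf_pow PN (u n) Tinv0 mT y.
have := hm _ (nu_Delta PN _) small; have := prob_radius_le PN A0 y (uA n).
lra.
Qed.

End DBoundedScaling.

Section FiniteDimensional.
Variables (R : realType) (V : vectType R) (nu : V -> R -> R).
Variables tau taus : (R -> R) -> (R -> R) -> (R -> R).
Hypothesis PN : PN_space nu tau taus.
Hypothesis archS : archimedean_tf taus.
Hypothesis nu_neq_epsinf : forall p, nu p <> epsinf.

Let n0 := \dim (fullv : {vspace V}).
Let e := vbasis (fullv : {vspace V}).
Let e_free : free e. Proof. exact: basis_free (vbasisP fullv). Qed.
Let coordK v : \sum_(i < n0) coord e i v *: e`_i = v.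
Proof. exact/esym/coord_vbasis/memvf. Qed.

Lemma null_seq_coord (l : 'I_n0 -> R) (x : nat -> V) :
  (forall i, coord e i (x n) @[n --> \oo] --> l i) ->
  null_seq nu (fun n => \sum_(i < n0) l i *: e`_i - x n).
Proof.
move=> cvg_x.
apply: (@null_seq_eq _ _ _ (fun n => \sum_(i < n0) (l i - coord e i (x n)) *: e`_i)).
  move=> n; rewrite -[in RHS](coordK (x n)) -sumrB.
  by apply: eq_bigr => i _; rewrite scalerBl.
apply: (null_seq_sum PN) => i.
have cvg0 : l i - coord e i (x n) @[n --> \oo] --> 0.
  by rewrite -(subrr (l i)); apply: cvgB; [exact: cvg_cst | exact: cvg_x].
exact: (null_seq_scale PN archS (@nu_neq_epsinf _) cvg0).
Qed.

Lemma not_null_seq_unit_coord (w : nat -> V) :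
  (forall n, \sum_(i < n0) `|coord e i (w n)| = 1) -> ~ null_seq nu w.
Proof.
move=> w1 w_null.
have coord_le1 n i : `|coord e i (w n)| <= 1.
  by rewrite -(w1 n) (bigD1 i) //= lerDl sumr_ge0.
have [psi [psi_incr cvg_coord]] := bolzano_weierstrass_fin coord_le1.
pose l i := limn (fun n => coord e i (w (psi n))).
have l1 : \sum_(i < n0) `|l i| = 1.
  have h : (\sum_(i < n0) `|coord e i (w (psi n))|) @[n --> \oo] --> \sum_(i < n0) `|l i|.
    by apply: cvg_big => [|i _]; [exact: add_continuous | exact: cvg_norm (cvg_coord i)].
  have w1_psi : (fun n => \sum_(i < n0) `|coord e i (w (psi n))|) = fun=> 1.
    by apply/funext => n; exact: w1.
  by rewrite w1_psi in h; exact: (cvg_unique (@Rhausdorff R) h (cvg_cst (1 : R))).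
have [i0 li0] : exists i0, l i0 != 0.
  apply: contrapT => l0; suff : \sum_(i < n0) `|l i| = 0.
    by rewrite l1 => /eqP; rewrite oner_eq0.
  apply: big1 => i _; apply/eqP; rewrite normr_eq0.
  by apply/negPn/negP => li; apply: l0; exists i.
pose v := \sum_(i < n0) l i *: e`_i.
have v0 : v != 0.
  by apply: contra li0 => /eqP v0; rewrite -(coord_sum_free l i0 e_free) -/v v0 linear0.
have v_null : null_seq nu (fun _ => v).
  have := null_seqD PN (null_seq_coord cvg_coord) (null_seq_subseq psi_incr w_null).
  by apply: null_seq_eq => n /=; rewrite subrK.
by move/eqP: v0; apply; exact: (null_seq_cst PN v_null).
Qed.

Variable A : set V.
Hypothesis A0 : A !=set0.

Lemma D_bounded_coord_bounded (u : nat -> V) : D_bounded nu A -> (forall n, A (u n)) ->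
  exists B, forall n i, `|coord e i (u n)| <= B.
Proof.
move=> hb uA; apply: contrapT => unbdd.
pose S n := \sum_(i < n0) `|coord e i (u n)|.
have S_ge n i : `|coord e i (u n)| <= S n by rewrite /S (bigD1 i) //= lerDl sumr_ge0.
have [g hg] : {g : nat -> nat & forall N, N.+1%:R <= S (g N)}.
  apply: (choice (P := fun N n => N.+1%:R <= S n)) => N.
  apply: contrapT => h; apply: unbdd; exists N.+1%:R => n i.
  apply: le_trans (S_ge n i) _; rewrite leNgt; apply/negP => Sn.
  by apply: h; exists n; exact: ltW.
have S0 N : 0 < S (g N) by apply: lt_le_trans (hg N); rewrite ltr0n.
apply: (@not_null_seq_unit_coord (fun N => (S (g N))^-1 *: u (g N))).
  move=> N; under eq_bigr do rewrite linearZ /= normrM normfV (gtr0_norm (S0 N)).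
  by rewrite -mulr_sumr mulVf ?lt0r_neq0.
exact: (D_bounded_null_scale PN archS A0 hb (fun N => uA (g N)) hg).
Qed.

Lemma D_bounded_closed_compact : D_bounded nu A -> strong_closed nu A -> D_compact nu A.
Proof.
move=> hb hcl u uA; have [B uB] := D_bounded_coord_bounded hb uA.
have [phi [phi_incr cvg_coord]] := bolzano_weierstrass_fin uB.
pose v := \sum_(i < n0) limn (fun n => coord e i (u (phi n))) *: e`_i.
have uv : strong_conv nu (u \o phi) v by apply/(strong_convE PN); exact: null_seq_coord.
exists phi; split => //; exists v => //; apply: contrapT => Av.
have [r r0 hr] := hcl v Av; have [N hN] := uv r r0.
exact: hr _ (hN N (leqnn N)) (uA (phi N)).
Qed.

End FiniteDimensional.

Theorem theorem28 (R : realType) (V : vectType R) (nu : V -> R -> R)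
    (tau taus : (R -> R) -> (R -> R) -> (R -> R))
    (nu' : R^o -> R -> R) (tau' taus' : (R -> R) -> (R -> R) -> (R -> R)) :
  PN_space nu tau taus ->
  archimedean_tf taus ->
  (forall p, nu p <> epsinf) ->
  (forall p, in_Dplus (nu p)) ->
  (forall F G, in_Dplus F -> in_Dplus G -> in_Dplus (tau F G)) ->
  PN_space nu' tau' taus' ->
  archimedean_tf taus' ->
  (forall r, nu' r <> epsinf) ->
  LG_property nu' ->
  forall A : set V, A !=set0 ->
    D_compact nu A <-> D_bounded nu A /\ strong_closed nu A.
Proof.
move=> PN archS nu_neq_epsinf nu_Dplus _ _ _ _ _ A A0; split.
- move=> hc; split; first exact: (D_compact_bounded PN nu_Dplus A0 hc).
  exact: (D_compact_closed PN hc).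
- by case=> hb hcl; exact: (D_bounded_closed_compact PN archS nu_neq_epsinf A0 hb hcl).
Qed.
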